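(* For every integer $r\ge1$, the characteristic polynomial of the signed adjacency matrix of $\mathcal{Q}_{r,r,2r}$ is $$\det\bigl(xI-M(\mathcal{Q}_{r,r,2r})\bigr)=(x^2+x-1)^{2r-1}\bigl(x^2-(2r-1)x-1\bigr).$$ In particular $\lambda_{\min}(\mathcal{Q}_{r,r,2r})=-\frac{1+\sqrt5}{2}$.
   Context: An edge-signed graph is a finite simple graph each of whose edges is labelled $+$ or $-$; its signed adjacency matrix $M(\mathcal{S})$ has $(u,v)$-entry $1$ for a $(+)$-edge, $-1$ for a $(-)$-edge, $0$ otherwise, and $\lambda_{\min}(\mathcal{S})$ denotes its smallest eigenvalue. For non-negative integers $p,q,r$ with $p+q\le r$, $\mathcal{Q}_{p,q,r}$ is the edge-signed graph defined as follows: its vertex set is a disjoint union $V_p\cup V_q\cup V_r$ with $|V_p|=p$, $|V_q|=q$, $|V_r|=r$; choose disjoint subsets $U_p,U_q\subseteq V_r$ with $|U_p|=p$, $|U_q|=q$ and bijections $\sigma:V_p\to U_p$, $\rho:V_q\to U_q$. The $(+)$-edges are all pairs of distinct vertices of $V_r$ together with the pairs $\{v,\sigma(v)\}$, $v\in V_p$; the $(-)$-edges are the pairs $\{v,\rho(v)\}$, $v\in V_q$; there are no other edges. *)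

From HB Require Import structures.
From mathcomp Require Import all_boot all_order all_algebra.
Set Implicit Arguments. Unset Strict Implicit. Unset Printing Implicit Defensive.
Import Order.TTheory GRing.Theory Num.Theory.
Local Open Scope ring_scope.

(* Vertex set: 'I_(r + p + q), with
     V_r = {0, ..., r-1},
     V_p = {r, ..., r+p-1},
     V_q = {r+p, ..., r+p+q-1}.
   U_p = {0, ..., p-1}, U_q = {p, ..., p+q-1} (disjoint subsets of V_r when p+q <= r),
   sigma (r+k) = k   (k < p),   rho (r+p+k) = p+k   (k < q);
   i.e. both bijections are  v |-> v - r  on their domains. *)

Definition Qpos (p q r : nat) (i j : nat) : bool :=
  [|| [&& (i < r)%N, (j < r)%N & i != j],
      [&& (r <= i)%N, (i < r + p)%N & j == (i - r)%N] |
      [&& (r <= j)%N, (j < r + p)%N & i == (j - r)%N] ].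

Definition Qneg (p q r : nat) (i j : nat) : bool :=
  [|| [&& (r + p <= i)%N, (i < r + p + q)%N & j == (i - r)%N] |
      [&& (r + p <= j)%N, (j < r + p + q)%N & i == (j - r)%N] ].

Definition Qmx (R : nzRingType) (p q r : nat) : 'M[R]_(r + p + q) :=
  \matrix_(i, j) (if Qpos p q r i j then 1
                  else if Qneg p q r i j then -1 else 0).

Definition is_lambda_min (R : realFieldType) (n : nat) (A : 'M[R]_n) (a : R) : Prop :=
  eigenvalue A a /\ (forall b, eigenvalue A b -> a <= b).

From HB Require Import structures.
From mathcomp Require Import all_boot all_order all_algebra.
From mathcomp Require Import zify ring lra.
Set Implicit Arguments. Unset Strict Implicit. Unset Printing Implicit Defensive.
Import Order.TTheory GRing.Theory Num.Theory.
Local Open Scope ring_scope.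

(* Ordering the vertices as V_r, then V_p, then V_q, the signed adjacency
   matrix of Q_{r,r,2r} is the block matrix  [[J - I, S], [S^T, 0]],  where
   J - I is the adjacency matrix of the complete graph on V_r and S is the
   2r x 2r diagonal matrix with r entries +1 (the matching sigma) followed by
   r entries -1 (the matching rho); in particular S S^T = I.

   Two Schur-complement identities for block matrices with a scalar diagonal
   block (stated multiplicatively, so that no division is needed) give
     x^{2r} det(xI - M) = x^{2r} det(x(xI - J + I) - I)
                        = x^{2r} det((x^2 + x - 1) I - x J),
   and applying both identities to the bordered matrix [[aI, b u], [u^T, 1]]
   (u the all-ones column) evaluates the rank-one perturbation
     a det(aI - bJ) = a^n (a - n b).
   Cancelling the nonzero polynomials x^{2r} and x^2 + x - 1 yields the
   characteristic polynomial. *)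

Section SchurComplements.
Variable R : comNzRingType.

Lemma det_block_schur_ul n m (x : R) (B : 'M[R]_(n, m)) (C : 'M[R]_(m, n)) (D : 'M[R]_m) :
  \det (block_mx x%:M B C D) * x ^+ m = x ^+ n * \det (x *: D - C *m B).
Proof.
pose L := block_mx (1 : 'M_n) 0 (- C) (x%:M : 'M_m).
have detL : \det L = x ^+ m by rewrite det_lblock det1 det_scalar mul1r.
have LM : L *m block_mx x%:M B C D = block_mx x%:M B 0 (x *: D - C *m B).
  rewrite mulmx_block !mul0mx !mul1mx !addr0 !mulNmx mul_mx_scalar mul_scalar_mx.
  by rewrite addNr mul_scalar_mx addrC.
by rewrite mulrC -detL -det_mulmx LM det_ublock det_scalar.
Qed.

Lemma det_block_schur_dr n m (x : R) (P : 'M[R]_n) (B : 'M[R]_(n, m)) (C : 'M[R]_(m, n)) :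
  \det (block_mx P B C x%:M) * x ^+ n = \det (x *: P - B *m C) * x ^+ m.
Proof.
pose W := block_mx (x%:M : 'M_n) 0 (- C) (1 : 'M_m).
have detW : \det W = x ^+ n by rewrite det_lblock det1 det_scalar mulr1.
have MW : block_mx P B C x%:M *m W = block_mx (x *: P - B *m C) B 0 x%:M.
  rewrite mulmx_block !mulmx0 !mulmx1 !add0r !mulmxN mul_mx_scalar mul_scalar_mx.
  by rewrite mul_mx_scalar addrN.
by rewrite -detW -det_mulmx MW det_ublock det_scalar.
Qed.

(* Determinant of a rank-one perturbation of a scalar matrix, obtained by
   comparing both Schur complements of [[aI, b u], [u^T, 1]]. *)
Lemma det_scalar_sub_allones n (a b : R) :
  a * \det (a%:M - b *: const_mx 1 : 'M[R]_n) = a ^+ n * (a - b *+ n).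
Proof.
pose u : 'cV[R]_n := const_mx 1.
have uTu : u^T *m u = n%:R%:M.
  apply/matrixP => i j; rewrite !mxE (ord1 i) (ord1 j) /=.
  under eq_bigr do rewrite !mxE mulr1.
  by rewrite sumr_const card_ord.
have uuT : u *m u^T = const_mx 1.
  by apply/matrixP => i j; rewrite !mxE big_ord1 !mxE mulr1.
pose M := block_mx (a%:M : 'M_n) (b *: u) u^T (1 : 'M_1).
have detM_ul : \det M * a = a ^+ n * (a - b *+ n).
  rewrite det_block_schur_ul -scalemxAr uTu det_mx11 !mxE /=.
  by rewrite mulr1 mulr1n mulr_natr.
have detM_dr : \det M = \det (a%:M - b *: const_mx 1 : 'M_n).
  have := det_block_schur_dr 1 (a%:M : 'M_n) (b *: u) u^T.
  by rewrite !expr1n !mulr1 scale1r -scalemxAl uuT.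
by rewrite -detM_dr mulrC.
Qed.
End SchurComplements.

Lemma char_poly_castmx (R : nzRingType) n m (e : n = m) (A : 'M[R]_n) :
  char_poly (castmx (e, e) A) = char_poly A.
Proof. by case: m / e; rewrite castmx_id. Qed.

Lemma char_poly_block_zero_corner (R : comNzRingType) n m (A : 'M[R]_n) (B : 'M[R]_(n, m)) :
  char_poly (block_mx A B B^T 0) * 'X ^+ n =
  \det ('X *: char_poly_mx A - map_mx polyC (B *m B^T)) * 'X ^+ m.
Proof.
rewrite /char_poly.
have -> : char_poly_mx (block_mx A B B^T 0) =
    block_mx (char_poly_mx A) (- map_mx polyC B) (- map_mx polyC B^T) 'X%:M.
  rewrite /char_poly_mx map_block_mx map_mx0 (scalar_mx_block n m) opp_block_mx.
  by rewrite add_block_mx subr0 !add0r.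
by rewrite det_block_schur_dr mulNmx mulmxN opprK map_mxM.
Qed.

Definition complete_mx (R : nzRingType) n : 'M[R]_n := const_mx 1 - 1%:M.

Definition signed_matching_mx (R : nzRingType) r : 'M[R]_(2 * r, r + r) :=
  \matrix_(i, j) if i == j :> nat then (if (j < r)%N then 1 else -1) else 0.

Lemma signed_matching_mx_orthogonal (R : nzRingType) r :
  signed_matching_mx R r *m (signed_matching_mx R r)^T = 1%:M.
Proof.
have e2 : (2 * r = r + r)%N by lia.
apply/matrixP => i j; rewrite !mxE (bigD1 (cast_ord e2 i)) //= big1 ?addr0.
  rewrite !mxE /= eqxx -val_eqE /= eq_sym.
  by case: eqP => _ ; case: ltnP => _; rewrite ?mulr1 ?mulr0 ?mulrNN ?mulr1.
move=> k hk; rewrite !mxE.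
case: eqP => [e|]; last by rewrite mul0r.
by move: hk; rewrite -val_eqE /= e eqxx.
Qed.

Lemma split_ordP m n (i : 'I_(m + n)) :
  (exists k : 'I_m, i = lshift n k) \/ (exists k : 'I_n, i = rshift m k).
Proof. by case: (splitP i) => k hk; [left | right]; exists k; apply: val_inj. Qed.

Lemma Qmx_block (R : nzRingType) r :
  castmx (esym (addnA _ _ _), esym (addnA _ _ _)) (Qmx R r r (2 * r)) =
  block_mx (complete_mx R (2 * r)) (signed_matching_mx R r)
           (signed_matching_mx R r)^T 0.
Proof.
apply/matrixP => i j; rewrite castmxE mxE /=.
case: (split_ordP i) => [[k ->]|[k ->]]; case: (split_ordP j) => [[l ->]|[l ->]];
  have hk := ltn_ord k; have hl := ltn_ord l.
- rewrite block_mxEul !mxE /=.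
  have -> : Qpos r r (2 * r) k l = (k != l :> nat) by rewrite /Qpos; apply/idP/idP; lia.
  have -> : Qneg r r (2 * r) k l = false by rewrite /Qneg; apply/idP/idP; lia.
  by rewrite -val_eqE /=; case: eqP => //= _; rewrite ?subrr ?subr0.
- rewrite block_mxEur !mxE /=.
  have -> : Qpos r r (2 * r) k (2 * r + l) = (k == l :> nat) && (l < r)%N
    by rewrite /Qpos; apply/idP/idP; lia.
  have -> : Qneg r r (2 * r) k (2 * r + l) = (k == l :> nat) && (r <= l)%N
    by rewrite /Qneg; apply/idP/idP; lia.
  by case: eqP => //= _; case: ltnP.
- rewrite block_mxEdl !mxE /=.
  have -> : Qpos r r (2 * r) (2 * r + k) l = (l == k :> nat) && (k < r)%N
    by rewrite /Qpos; apply/idP/idP; lia.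
  have -> : Qneg r r (2 * r) (2 * r + k) l = (l == k :> nat) && (r <= k)%N
    by rewrite /Qneg; apply/idP/idP; lia.
  by case: eqP => //= _; case: ltnP.
- rewrite block_mxEdr !mxE /=.
  have -> : Qpos r r (2 * r) (2 * r + k) (2 * r + l) = false
    by rewrite /Qpos; apply/idP/idP; lia.
  have -> : Qneg r r (2 * r) (2 * r + k) (2 * r + l) = false
    by rewrite /Qneg; apply/idP/idP; lia.
  by [].
Qed.

Lemma char_poly_Q (R : idomainType) r (hr : (1 <= r)%N) :
  char_poly (Qmx R r r (2 * r)) =
    ('X ^+ 2 + 'X - 1) ^+ (2 * r - 1) * ('X ^+ 2 - ((2 * r - 1)%N)%:R *: 'X - 1).
Proof.
set a : {poly R} := 'X ^+ 2 + 'X - 1.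
have a_neq0 : a != 0.
  apply/eqP => /(congr1 (horner^~ 0)).
  by rewrite /a !hornerE expr0n /= add0r => /eqP; rewrite oppr_eq0 oner_eq0.
have Xn_neq0 : ('X ^+ (2 * r) : {poly R}) != 0 by rewrite expf_neq0 // polyX_eq0.
have schur_complement : 'X *: char_poly_mx (complete_mx R (2 * r)) -
    map_mx polyC (signed_matching_mx R r *m (signed_matching_mx R r)^T) =
    a%:M - 'X *: const_mx 1.
  rewrite signed_matching_mx_orthogonal map_mx1 /char_poly_mx /complete_mx.
  rewrite map_mxB map_const_mx map_mx1 /=.
  by apply/matrixP => i j; rewrite !mxE /a; case: eqP => _ /=; rewrite ?mulr1n ?mulr0n; ring.
have := char_poly_block_zero_corner (complete_mx R (2 * r)) (signed_matching_mx R r).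
rewrite -Qmx_block char_poly_castmx schur_complement addnn -mul2n => /(mulIf Xn_neq0) ->.
apply: (mulfI a_neq0); rewrite det_scalar_sub_allones.
have -> : a ^+ (2 * r) = a * a ^+ (2 * r - 1) by rewrite -exprS; congr (_ ^+ _); lia.
rewrite -!mulrA; congr (_ * (_ * _)).
rewrite /a -mul_polyC natrB ?muln_gt0 // polyCB polyC_natr -mulr_natr; ring.
Qed.

Lemma root_char_poly_Q (R : idomainType) r (hr : (1 <= r)%N) (x : R) :
  root (char_poly (Qmx R r r (2 * r))) x =
  (x ^+ 2 + x - 1 == 0) || (x ^+ 2 - ((2 * r - 1)%N)%:R * x - 1 == 0).
Proof.
have k_gt0 : (0 < 2 * r - 1)%N by lia.
by rewrite char_poly_Q // /root !hornerE mulf_eq0 expf_eq0 k_gt0.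
Qed.

Section GoldenRatio.
Variable R : rcfType.
Let phi : R := (1 + Num.sqrt 5) / 2.

Lemma opp_golden_ratio_root : (- phi) ^+ 2 + (- phi) - 1 = 0.
Proof.
have s2 : Num.sqrt (5 : R) ^+ 2 = 5 by rewrite sqr_sqrtr.
transitivity ((Num.sqrt (5 : R) ^+ 2 - 5) / 4); first by rewrite /phi; field.
by rewrite s2 subrr mul0r.
Qed.

Lemma opp_golden_ratio_le (c x : R) : 0 <= c ->
  (x ^+ 2 + x - 1 == 0) || (x ^+ 2 - c * x - 1 == 0) -> - phi <= x.
Proof.
have s0 : 0 <= Num.sqrt (5 : R) by apply: sqrtr_ge0.
have s2 : Num.sqrt (5 : R) ^+ 2 = 5 by rewrite sqr_sqrtr.
by rewrite /phi => c0 /orP [] /eqP ?; nra.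
Qed.
End GoldenRatio.

Theorem mainTheorem6 (R : rcfType) (r : nat) (hr : (1 <= r)%N) :
  char_poly (Qmx R r r (2 * r)) =
    ('X ^+ 2 + 'X - 1) ^+ (2 * r - 1) * ('X ^+ 2 - ((2 * r - 1)%N)%:R *: 'X - 1)
  /\ is_lambda_min (Qmx R r r (2 * r)) (- (1 + Num.sqrt 5) / 2).
Proof.
split; first exact: char_poly_Q.
split => [|b]; rewrite eigenvalue_root_char root_char_poly_Q // mulNr.
  by rewrite opp_golden_ratio_root eqxx.
exact/opp_golden_ratio_le/ler0n.
Qed.
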